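(* Assume (H1) and (H2). Fix $\varepsilon>0$, let $\alpha=2/5$ and let $\delta,\gamma,\rho>0$ be such that $\mathbb{P}_n(\Omega_n^{\alpha,\delta,\gamma,\rho})\ge1-\varepsilon$ for all $n$ large enough; write $\Omega_\varepsilon=\Omega_n^{\alpha,\delta,\gamma,\rho}$. For any $\alpha'>0$ and $a>0$ there exist $\beta>0$, $c>0$ such that for any $s,t\in[0,1]$ with $|s-t|\le(\log n)^{-3}$, for $n$ large enough, $$\mathbb{E}_n\big(\|\mathbf{G}^{(n)}_s-\mathbf{G}^{(n)}_t\|_1^\beta\mathbb{1}_{\Omega_\varepsilon}\big)\le c|t-s|^{1+a}.$$
   Context: Planar trees: finite subsets $T$ of the set of finite words over $\{1,2,\dots\}$ containing the empty word $\emptyset$, with $ui\in T\Rightarrow u\in T$ and $uj\in T$ for $1\le j\le i$; $c_u(T)$ number of children, $|u|$ word length, $d$ graph distance; vertices ordered lexicographically (prefixes first), $u(k)$ the $k$-th vertex, $u(0)=\emptyset$; $\mathcal{T}_n$: trees with $n+1$ vertices. (H1): $\mu=(\mu_k)_{k\ge0}$ probability on $\mathbb{N}$ with $\mu_0+\mu_1\ne1$, $\sum_kk\mu_k=1$, $\sum_{k\le K}\mu_k=1$ for some integer $K>0$. $\mathbf{T}$: GW tree with offspring law $\mu$; $\mathbb{P}_n=\mathbb{P}(\cdot\mid|\mathbf{T}|=n+1)$, $\mathbb{E}_n$ its expectation. (H2): for $k\ge1$, $\nu_k$ probability on $\mathbb{R}^k$, $(Y_{k,1},\dots,Y_{k,k})\sim\nu_k$,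 $m_{k,j}=\mathbb{E}Y_{k,j}$; require $\sum_k\sum_{j\le k}\mu_km_{k,j}=0$, $\sum_k\sum_{j\le k}\mu_k\mathbb{E}(Y^2_{k,j})\in(0,\infty)$, and some $p>4$ with $\mathbb{E}|Y_{k,j}-m_{k,j}|^p<\infty$ for all $1\le j\le k\le K$. $I_K=\{(k,j):1\le j\le k\le K\}$; $\|X\|_1=\sum_{I_K}|X_{k,j}|$. $A_{u,k,j}$: number of strict ancestors $v$ of $u$ with $c_v=k$ and $u$ descending from (or equal to) $vj$; $A_{u,l,k,j}$: number of those with moreover $d(u,v)\le l$. $\mathbf{G}^{(n)}_{k,j}(s)=n^{-1/4}[\mathbf{g}(\lfloor ns\rfloor)+\{ns\}(\mathbf{g}(\lfloor ns\rfloor+1)-\mathbf{g}(\lfloor ns\rfloor))]$ with $\mathbf{g}(l)=A_{u(l),k,j}-\mu_k|u(l)|$. $\mathbf{h}_n(s)=H_{ns}/\sqrt n$ with $H$ the interpolation of $k\mapsto|u(k)|$. $\Omega_n^{\alpha,\delta,\gamma,\rho}$: set of $T\in\mathcal{T}_n$ with $|\mathbf{h}_n(s)-\mathbf{h}_n(t)|\le\delta|t-s|^\alpha$ for all $s,t\in[0,1]$, $\max_l||u(l+1)|-|u(l)||\le\rho\log n$, $|u(n)|<\rho\log n$, and $|A_{u,l,k,j}-\mu_kl|\le\gamma\sqrt{l\log n}$ for all $(k,j)\in I_K$, $u\in T$, $l\in(0,|u|]$. *)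

From HB Require Import structures.
From mathcomp Require Import all_boot all_order all_algebra.
From mathcomp Require Import all_classical all_reals all_analysis.
Set Implicit Arguments. Unset Strict Implicit. Unset Printing Implicit Defensive.
Import Order.TTheory GRing.Theory Num.Theory.
Import numFieldNormedType.Exports.
Local Open Scope classical_set_scope.
Local Open Scope ring_scope.

(** Words over {1,2,...}: lists of naturals (letters are required to be >= 1). *)
Definition word := seq nat.

Fixpoint lexlt (u v : word) : bool :=
  match u, v with
  | [::], [::] => false
  | [::], _ :: _ => true
  | _ :: _, [::] => false
  | a :: u', b :: v' => (a < b)%N || ((a == b) && lexlt u' v')
  end.

(** A planar tree is represented by the list of its vertices in
    lexicographic order, so that [nth [::] T k] is the vertex u(k). *)
Definition is_planar_tree (T : seq word) : Prop :=
  [::] \in T /\ sorted lexlt T /\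
  (forall u, u \in T -> all (fun x => (0 < x)%N) u) /\
  (forall u i, rcons u i \in T ->
     u \in T /\ forall j, (0 < j <= i)%N -> rcons u j \in T).

Definition Trees_n (n : nat) : set (seq word) :=
  [set T | is_planar_tree T /\ size T = n.+1].

Definition children (T : seq word) (u : word) : nat :=
  count (fun v => (size v == (size u).+1) && (take (size u) v == u)) T.

Definition vertex (T : seq word) (k : nat) : word := nth [::] T k.

(** A_{u,k,j}: strict ancestors v = take i u (i < |u|) with c_v = k and
    u descending from (or equal to) v j, i.e. the (i+1)-th letter of u is j. *)
Definition A_ukj (T : seq word) (u : word) (k j : nat) : nat :=
  count (fun i => (children T (take i u) == k) && (nth 0%N u i == j))
        (iota 0 (size u)).

(** A_{u,l,k,j}: moreover d(u,v) = |u| - |v| <= l. *)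
Definition A_ulkj (T : seq word) (u : word) (l k j : nat) : nat :=
  count (fun i => [&& (size u - i <= l)%N, children T (take i u) == k
                    & nth 0%N u i == j])
        (iota 0 (size u)).

Section Defs.
Variable R : realType.

Definition gw_weight (mu : nat -> R) (T : seq word) : R :=
  \prod_(u <- T) mu (children T u).

(** P(|T| = n+1) *)
Definition Zn (mu : nat -> R) (n : nat) : R :=
  \sum_(T \in Trees_n n) gw_weight mu T.

(** E_n = E( . | |T| = n+1) *)
Definition En (mu : nat -> R) (n : nat) (f : seq word -> R) : R :=
  (\sum_(T \in Trees_n n) gw_weight mu T * f T) / Zn mu n.

Definition Pn (mu : nat -> R) (n : nat) (A : set (seq word)) : R :=
  En mu n (\1_A).

Definition interp (f : nat -> R) (x : R) : R :=
  let m := Num.truncn x in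
  f m + (x - m%:R) * (f m.+1 - f m).

Definition hn (T : seq word) (n : nat) (s : R) : R :=
  interp (fun l => (size (vertex T l))%:R) (n%:R * s) / Num.sqrt n%:R.

Definition Gn (mu : nat -> R) (T : seq word) (n k j : nat) (s : R) : R :=
  n%:R `^ (- (1 / 4)) *
  interp (fun l => (A_ukj T (vertex T l) k j)%:R - mu k * (size (vertex T l))%:R)
         (n%:R * s).

Definition G_dist1 (mu : nat -> R) (K : nat) (T : seq word) (n : nat) (s t : R) : R :=
  \sum_(1 <= k < K.+1) \sum_(1 <= j < k.+1) `|Gn mu T n k j s - Gn mu T n k j t|.

Definition Omega (mu : nat -> R) (K n : nat) (alpha delta gamma rho : R) :
    set (seq word) :=
  [set T | Trees_n n T /\
    (forall s t : R, 0 <= s <= 1 -> 0 <= t <= 1 ->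
       `|hn T n s - hn T n t| <= delta * `|t - s| `^ alpha) /\
    (forall l : nat, (l < n)%N ->
       `|(size (vertex T l.+1))%:R - (size (vertex T l))%:R| <= rho * ln n%:R) /\
    ((size (vertex T n))%:R < rho * ln n%:R) /\
    (forall (k j : nat) (u : word) (l : nat), (1 <= j <= k)%N -> (k <= K)%N ->
       u \in T -> (0 < l <= size u)%N ->
       `|(A_ulkj T u l k j)%:R - mu k * l%:R| <= gamma * Num.sqrt (l%:R * ln n%:R))].

End Defs.

From HB Require Import structures.
From mathcomp Require Import all_boot all_order all_algebra.
From mathcomp Require Import all_classical all_reals all_analysis.
From mathcomp Require Import zify ring lra.
Set Implicit Arguments.
Unset Strict Implicit.
Unset Printing Implicit Defensive.
Import Order.TTheory GRing.Theory Num.Theory.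
Import numFieldNormedType.Exports.
Local Open Scope classical_set_scope.
Local Open Scope ring_scope.

(* On Omega the bound holds pointwise.  Write g(l) = A_{u(l),k,j} - mu_k |u(l)|.  Between two vertices
   u(i), u(i') with i <= i' lies a vertex u(c) whose height is at most one more
   than the length p of the common prefix of u(i) and u(i'); along that prefix
   both A-counts agree, so |g(i) - g(i')| is bounded by the Omega-deviation
   bounds of the two remaining segments, gamma sqrt((H_i - H_c + 1) log n) +
   gamma sqrt((H_i' - H_c + 1) log n).  The Hoelder bound on the height process
   gives H_i - H_c <= delta |t - s|^(2/5) sqrt n, and when |t - s| <= (log n)^-3
   every term of n^(-1/4) |g(ns) - g(nt)| is O(|t - s|^(1/30)).  Raising to the
   power beta = 30 (1 + a) bounds the integrand by c |t - s|^(1 + a). *)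

Lemma lexlt_irr (u : word) : ~~ lexlt u u.
Proof. by elim: u => [|a u IH] //=; rewrite ltnn eqxx /=. Qed.

Lemma lexlt_trans : transitive lexlt.
Proof.
move=> v u w; elim: u v w => [|a u IH] [|b v] [|c w] //=.
move=> /orP[ab | /andP[/eqP <- uv]] /orP[bc | /andP[/eqP <- vw]].
- by rewrite (ltn_trans ab bc).
- by rewrite ab.
- by rewrite bc.
- by rewrite eqxx (IH _ _ uv vw) orbT.
Qed.

Lemma take_eq_or_lexlt (m : nat) (v : word) : take m v = v \/ lexlt (take m v) v.
Proof.
elim: v m => [|b v IH] [|m] /=; try by left.
  by right.
case: (IH m) => [->|h]; first by left.
by right; rewrite eqxx h orbT.
Qed.

Lemma lexlt_prefix_or_branch (u v : word) : lexlt u v ->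
  take (size u) v = u \/
  exists p, [/\ (p < size u)%N, (p < size v)%N, take p u = take p v &
                lexlt u (take p.+1 v)].
Proof.
elim: u v => [|a u IH] [|b v] //=; first by move=> _; left.
move=> /orP[ab | /andP[/eqP eab uv]].
  by right; exists 0%N; split => //=; rewrite ab.
subst b; case: (IH _ uv) => [->|[p [h1 h2 h3 h4]]]; first by left.
by right; exists p.+1; split => //=; rewrite ?h3 // eqxx h4 orbT.
Qed.

Lemma tree_take_closed (T : seq word) (v : word) (m : nat) :
  is_planar_tree T -> v \in T -> take m v \in T.
Proof.
move=> [_ [_ [_ HT]]] vT.
have [hm|hm] := leqP (size v) m; first by rewrite take_oversize.
suff H : forall k, take (size v - k) v \in T.
  by have := H (size v - m)%N; rewrite subKn // ltnW.
elim=> [|k IH]; first by rewrite subn0 take_size.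
case E: (size v - k)%N IH => [|q] IH.
  by have -> : (size v - k.+1 = 0)%N by lia.
have -> : (size v - k.+1 = q)%N by lia.
rewrite (take_nth 0%N) in IH; last by lia.
by have [] := HT _ _ IH.
Qed.

(* When u(i) is not a prefix of u(j), u(c) is the ancestor of u(j) just below
   their branching point: it lies between u(i) and u(j) in lexicographic order. *)
Lemma common_prefix_low_vertex (T : seq word) (n i j : nat) :
  is_planar_tree T -> size T = n.+1 -> (i <= j)%N -> (j <= n)%N ->
  exists p c, [/\ (p <= size (vertex T i))%N, (p <= size (vertex T j))%N,
     take p (vertex T i) = take p (vertex T j),
     (i <= c <= j)%N & (size (vertex T c) <= p.+1)%N].
Proof.
move=> HT Hs ij jn.
have [eij|ltij] := eqVneq i j.
  by subst j; exists (size (vertex T i)), i; split => //; rewrite leqnn.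
have {}ltij : (i < j)%N by rewrite ltn_neqAle ltij.
have Hsort : sorted lexlt T by case: HT => _ [].
have sorted_vertex a b : (a < b)%N -> (b <= n)%N -> lexlt (vertex T a) (vertex T b).
  by move=> ab bn; apply: (sorted_ltn_nth lexlt_trans) => //; rewrite inE Hs; lia.
case: (lexlt_prefix_or_branch (sorted_vertex _ _ ltij jn)) => [hpre | [p [h1 h2 h3 h4]]].
  exists (size (vertex T i)), i; split.
  - exact: leqnn.
  - have := congr1 size hpre; rewrite size_take; case: ifP => h0 h; lia.
  - by rewrite take_size hpre.
  - by rewrite leqnn ltnW.
  - exact: leqnSn.
set x := take p.+1 (vertex T j) in h4.
have xT : x \in T.
  apply: tree_take_closed => //; apply: mem_nth; rewrite Hs; lia.
have xn : (index x T <= n)%N by rewrite -ltnS -Hs index_mem.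
have vx : vertex T (index x T) = x by rewrite /vertex nth_index.
exists p, (index x T); split => //; try lia.
- apply/andP; split; rewrite leqNgt; apply/negP.
  + move=> /sorted_vertex /(_ (leq_trans ij jn)); rewrite vx => hxu.
    by have := lexlt_irr (vertex T i); rewrite (lexlt_trans h4 hxu).
  + move=> /sorted_vertex /(_ xn); rewrite vx => hvx.
    case: (take_eq_or_lexlt p.+1 (vertex T j)) => hx.
      by have := lexlt_irr (vertex T j); rewrite -{2}hx hvx.
    by have := lexlt_irr (vertex T j); rewrite (lexlt_trans hvx hx).
- by rewrite vx size_takel.
Qed.

Section AncestorCounts.
Local Open Scope nat_scope.

Lemma A_ukj_split (T : seq word) (u : word) (p k j : nat) : p <= size u ->
  A_ukj T u k j =
  count (fun i => (children T (take i (take p u)) == k) &&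
                  (nth 0 (take p u) i == j)) (iota 0 p) +
  A_ulkj T u (size u - p) k j.
Proof.
move=> hp; rewrite /A_ukj /A_ulkj.
have -> : iota 0 (size u) = iota 0 p ++ iota p (size u - p).
  by rewrite -iotaD subnKC.
rewrite !count_cat addnA; congr addn.
have -> : count (fun i : nat =>
     [&& size u - i <= size u - p, children T (take i u) == k
       & nth 0 u i == j]) (iota 0 p) = 0.
  apply/eqP; rewrite -leqn0 leqNgt -has_count; apply/hasPn => i.
  rewrite mem_iota add0n => /andP[_ hi] /=.
  by have -> : (size u - i <= size u - p) = false by apply/negbTE; lia.
rewrite addn0; apply: eq_in_count => i; rewrite mem_iota add0n => /andP[_ hi].
by rewrite take_takel ?nth_take // ltnW.
apply: eq_in_count => i; rewrite mem_iota => /andP[hi _] /=.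
by rewrite leq_sub2l.
Qed.

Lemma A_ulkj0 (T : seq word) (u : word) (k j : nat) : A_ulkj T u 0 k j = 0.
Proof.
rewrite /A_ulkj; apply/eqP; rewrite -leqn0 leqNgt -has_count; apply/hasPn => i.
by rewrite mem_iota add0n => /andP[_ hi] /=; rewrite leqn0 subn_eq0 leqNgt hi.
Qed.

End AncestorCounts.

Definition height (R : realType) (T : seq word) (l : nat) : R :=
  (size (vertex T l))%:R.

Definition gdev (R : realType) (mu : nat -> R) (T : seq word) (k j l : nat) : R :=
  (A_ukj T (vertex T l) k j)%:R - mu k * height R T l.
Arguments gdev {R}.

Section Deviation.
Variables (R : realType) (mu : nat -> R) (T : seq word) (k j : nat) (gam L : R).
Hypotheses (gam_ge0 : 0 <= gam) (L_ge0 : 0 <= L).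
Hypothesis A_dev : forall w l, w \in T -> (0 < l <= size w)%N ->
  `|(A_ulkj T w l k j)%:R - mu k * l%:R| <= gam * Num.sqrt (l%:R * L).

Lemma A_dev0 u l : u \in T -> (l <= size u)%N ->
  `|(A_ulkj T u l k j)%:R - mu k * l%:R| <= gam * Num.sqrt (l%:R * L).
Proof.
move=> uT; case: l => [|l] hl; last exact: A_dev.
by rewrite A_ulkj0 !mulr0 subr0 normr0 mulr_ge0 // sqrtr_ge0.
Qed.

Lemma gdev_common_prefix u v p :
  u \in T -> v \in T -> (p <= size u)%N -> (p <= size v)%N ->
  take p u = take p v ->
  `|((A_ukj T u k j)%:R - mu k * (size u)%:R) -
    ((A_ukj T v k j)%:R - mu k * (size v)%:R)| <=
  gam * Num.sqrt ((size u - p)%:R * L) + gam * Num.sqrt ((size v - p)%:R * L).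
Proof.
move=> uT vT pu pv tuv.
rewrite (A_ukj_split T k j pu) (A_ukj_split T k j pv) tuv.
set c := count _ _.
have split_size (w : word) : (p <= size w)%N -> (size w)%:R = p%:R + (size w - p)%:R :> R.
  by move=> pw; rewrite -natrD subnKC.
rewrite (split_size u pu) (split_size v pv) !natrD.
set a := (A_ulkj T u _ k j)%:R; set b := (A_ulkj T v _ k j)%:R.
set lu := (size u - p)%:R; set lv := (size v - p)%:R.
have -> : c%:R + a - mu k * (p%:R + lu) - (c%:R + b - mu k * (p%:R + lv)) =
   (a - mu k * lu) - (b - mu k * lv) by ring.
by apply: le_trans (ler_normB _ _) _; apply: lerD; apply: A_dev0 => //; apply: leq_subr.
Qed.

Lemma gdev_two_vertices n i i' :
  is_planar_tree T -> size T = n.+1 -> (i <= i')%N -> (i' <= n)%N ->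
  exists c, (i <= c <= i')%N /\
   `|gdev mu T k j i - gdev mu T k j i'| <=
   gam * Num.sqrt ((height R T i - height R T c + 1) * L) +
   gam * Num.sqrt ((height R T i' - height R T c + 1) * L).
Proof.
move=> HT Hs ii' i'n.
have [p [c [h1 h2 h3 h4 h5]]] := common_prefix_low_vertex HT Hs ii' i'n.
exists c; split => //.
have inT l : (l <= n)%N -> vertex T l \in T by move=> ln; apply: mem_nth; rewrite Hs.
have iT : vertex T i \in T by apply: inT; lia.
apply: le_trans (gdev_common_prefix iT (inT _ i'n) h1 h2 h3) _.
have hc : height R T c <= p%:R + 1 by rewrite /height natr1 ler_nat.
apply: lerD; apply: ler_wpM2l => //; rewrite ler_sqrt ?mulr_ge0 //;
  first [apply: ler_wpM2r => //; rewrite natrB // /height; lra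
        | rewrite /height; have := ler_nat R p (size (vertex T i)); rewrite h1; lra
        | rewrite /height; have := ler_nat R p (size (vertex T i')); rewrite h2; lra].
Qed.

End Deviation.

Section Interpolation.
Variables (R : realType) (f : nat -> R).

Lemma interp_nat (a : nat) : interp f a%:R = f a.
Proof. by rewrite /interp natrK subrr mul0r addr0. Qed.

Lemma interp_minn (n : nat) (x : R) :
  0 <= x <= n%:R -> interp f x = interp (fun l => f (minn l n)) x.
Proof.
move=> /andP[x0 xn]; rewrite /interp.
have [h1 h2] := andP (truncn_itv x0).
set m := Num.truncn x in h1 h2 *.
have mn : (m <= n)%N by rewrite -(ler_nat R); lra.
have [mn'|mn'] := ltnP m n; first by rewrite (minn_idPl mn').
have em : m = n by apply/eqP; rewrite eqn_leq mn mn'.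
have ex : x = m%:R by rewrite em in h1 *; lra.
by rewrite ex subrr !mul0r !addr0 em.
Qed.

Variable B : R.
Hypothesis f_step : forall m, `|f m.+1 - f m| <= B.

Lemma interp_lipschitz_near (x y : R) : 0 <= x -> x <= y ->
  (Num.truncn y <= (Num.truncn x).+1)%N ->
  `|interp f y - interp f x| <= (y - x) * B.
Proof.
move=> x0 xy ht; rewrite /interp.
have [hx1 hx2] := andP (truncn_itv x0).
have [hy1 hy2] := andP (truncn_itv (le_trans x0 xy)).
set m := Num.truncn x in hx1 hx2 ht *.
set m' := Num.truncn y in hy1 hy2 ht *.
have mm' : (m <= m')%N by apply: le_truncn.
have [e|e] : m' = m \/ m' = m.+1 by lia.
  rewrite e.
  have -> : f m + (y - m%:R) * (f m.+1 - f m) - (f m + (x - m%:R) * (f m.+1 - f m))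
     = (y - x) * (f m.+1 - f m) by ring.
  by rewrite normrM ger0_norm ?subr_ge0 // ler_wpM2l ?subr_ge0.
rewrite e in hy1 hy2 *.
have -> : f m.+1 + (y - m.+1%:R) * (f m.+2 - f m.+1) -
  (f m + (x - m%:R) * (f m.+1 - f m)) =
  (y - m.+1%:R) * (f m.+2 - f m.+1) + (m.+1%:R - x) * (f m.+1 - f m).
  by rewrite -natr1; ring.
apply: le_trans (ler_normD _ _) _.
have g1 : 0 <= y - m.+1%:R by lra.
have g2 : 0 <= m.+1%:R - x by lra.
rewrite !normrM (ger0_norm g1) (ger0_norm g2).
have -> : (y - x) * B = (y - m.+1%:R) * B + (m.+1%:R - x) * B by ring.
by apply: lerD; apply: ler_wpM2l.
Qed.

Lemma interp_far_le (x y : R) : 0 <= x -> x <= y ->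
  ((Num.truncn x).+1 < Num.truncn y)%N ->
  `|interp f y - interp f x| <=
     2 * B + `|f (Num.truncn x).+1 - f (Num.truncn y)|.
Proof.
move=> x0 xy ht; rewrite /interp.
have [hx1 hx2] := andP (truncn_itv x0).
have [hy1 hy2] := andP (truncn_itv (le_trans x0 xy)).
set m := Num.truncn x in hx1 hx2 ht *.
set m' := Num.truncn y in hy1 hy2 ht *.
have -> : f m' + (y - m'%:R) * (f m'.+1 - f m') - (f m + (x - m%:R) * (f m.+1 - f m))
  = (y - m'%:R) * (f m'.+1 - f m') + (m.+1%:R - x) * (f m.+1 - f m)
    - (f m.+1 - f m') by rewrite -natr1; ring.
have B0 : 0 <= B by apply: le_trans (f_step 0%N); exact: normr_ge0.
have A1 : `|(y - m'%:R) * (f m'.+1 - f m')| <= B.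
  rewrite normrM ger0_norm ?subr_ge0 // -[B]mul1r.
  by apply: ler_pM => //; [rewrite subr_ge0 | rewrite -natr1 in hy2; lra].
have A2 : `|(m.+1%:R - x) * (f m.+1 - f m)| <= B.
  rewrite normrM ger0_norm; last lra.
  by rewrite -[B]mul1r; apply: ler_pM => //; rewrite -natr1 in hx2 *; lra.
have B1 := ler_normB ((y - m'%:R) * (f m'.+1 - f m') + (m.+1%:R - x) * (f m.+1 - f m)) (f m.+1 - f m').
have B2 := ler_normD ((y - m'%:R) * (f m'.+1 - f m')) ((m.+1%:R - x) * (f m.+1 - f m)).
lra.
Qed.

End Interpolation.

Section Estimates.
Variable R : realType.
Implicit Types x d N L : R.

Lemma powRD_gt0 x r s : 0 < x -> x `^ (r + s) = x `^ r * x `^ s.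
Proof. by move=> x0; rewrite powRD //; apply/implyP => _; rewrite gt_eqF. Qed.

Lemma expR1_le4 : expR 1 <= 4 :> R.
Proof.
have h := expR_ge1Dx (- (1/2) : R).
have hp := expR_gt0 (1/2 : R).
have h2 : expR (1/2) <= 2 :> R.
  rewrite expRN in h.
  have : 1 / 2 <= (expR (1/2))^-1 :> R by lra.
  rewrite ler_pdivrMr // => /(ler_wpM2r (ltW hp)).
  rewrite mulrAC mulVf ?gt_eqF // mul1r; lra.
have -> : (1 : R) = 1/2 + 1/2 by lra.
rewrite expRD.
have : expR (1/2) * expR (1/2) <= 2 * 2 :> R by apply: ler_pM => //; exact: ltW.
lra.
Qed.

Lemma ln_ge1 x : 4 <= x -> 1 <= ln x.
Proof.
move=> h; rewrite -[X in X <= _](expRK 1) ler_ln ?posrE ?expR_gt0 //; last lra.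
exact: le_trans expR1_le4 h.
Qed.

Lemma ln_le_powR x : 0 < x -> ln x <= 8 * x `^ (1/8).
Proof.
move=> x0; have p0 := powR_gt0 (1/8) x0.
have := ln_sublinear p0; rewrite ln_powR => h; lra.
Qed.

Lemma powRN_le N d r : 0 < N -> 0 <= r -> 1 <= N * d -> N `^ (- r) <= d `^ r.
Proof.
move=> N0 r0 hNd.
have d0 : 0 <= d.
  rewrite leNgt; apply/negP => dn; have : N * d < 0 by rewrite pmulr_rlt0.
  lra.
have h1 : 1 <= N `^ r * d `^ r.
  rewrite -powRM //; last exact: ltW.
  have := @ge0_ler_powR R r r0 1 (N * d).
  rewrite powR1 !nnegrE; apply => //; exact: le_trans hNd.
apply: le_trans (_ : N `^ (- r) * (N `^ r * d `^ r) <= _).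
  by rewrite -{1}(mulr1 (N `^ _)) ler_wpM2l // powR_ge0.
by rewrite mulrA -powRD_gt0 // addNr powRr0 mul1r.
Qed.

Lemma near_scale_bound N d : 4 <= N -> 0 <= d <= 1 -> N * d <= 2 ->
  N `^ (- (1/4)) * (N * d * ln N) <= 16 * d `^ (1/30).
Proof.
move=> N4 /andP[d0 d1] Nd2.
have N0 : 0 < N by lra.
have [->|dp] := eqVneq d 0.
  by rewrite mulr0 mul0r mulr0 powR0 ?mulr0 //; lra.
have dpos : 0 < d by rewrite lt0r dp.
have q0 : 0 <= N `^ (- (1/4)) := powR_ge0 _ _.
have E1 : N `^ (- (1/4)) * N `^ (1/8) * N = N `^ (7/8).
  rewrite -powRD_gt0 // -[X in _ * X = _](powRr1 (ltW N0)) -powRD_gt0 //.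
  by congr (_ `^ _); lra.
have E2 : N `^ (7/8) * d = (N * d) `^ (7/8) * d `^ (1/8).
  rewrite (powRM _ (ltW N0) (ltW dpos)) -mulrA -powRD_gt0 //.
  have -> : (7/8 + 1/8 : R) = 1 by lra.
  by rewrite powRr1 //; exact: ltW.
have B1 : (N * d) `^ (7/8) <= 2.
  have := @ge0_ler_powR R (7/8) ltac:(lra) (N * d) 2; rewrite !nnegrE => H.
  have H2 : 2 `^ (7/8) <= 2 :> R by apply: ler1_powR; lra.
  have := H (mulr_ge0 (ltW N0) d0) ltac:(lra) Nd2; lra.
have B2 : d `^ (1/8) <= d `^ (1/30) by apply: ger_powR; [rewrite dpos d1 | lra].
have B3 : 0 <= d `^ (1/8) := powR_ge0 _ _.
have B4 : 0 <= (N * d) `^ (7/8) := powR_ge0 _ _.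
apply: le_trans (_ : N `^ (- (1/4)) * (N * d * (8 * N `^ (1/8))) <= _).
  by apply: ler_wpM2l => //; apply: ler_wpM2l; [rewrite mulr_ge0 //; lra | exact: ln_le_powR].
have -> : N `^ (- (1/4)) * (N * d * (8 * N `^ (1/8))) =
   8 * ((N `^ (- (1/4)) * N `^ (1/8) * N) * d) by ring.
rewrite E1 E2.
have : (N * d) `^ (7/8) * d `^ (1/8) <= 2 * d `^ (1/30) by apply: ler_pM.
lra.
Qed.

Lemma far_scale_bound N d : 4 <= N -> 1 <= N * d -> d <= 1 ->
  N `^ (- (1/4)) * ln N <= 8 * d `^ (1/30).
Proof.
move=> N4 Nd d1.
have N0 : 0 < N by lra.
have dpos : 0 < d.
  rewrite ltNge; apply/negP => dn.
  have : N * d <= 0 by rewrite pmulr_rle0.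
  lra.
apply: le_trans (_ : N `^ (- (1/4)) * (8 * N `^ (1/8)) <= _).
  exact/ler_wpM2l/ln_le_powR/N0/powR_ge0.
have -> : N `^ (- (1/4)) * (8 * N `^ (1/8)) = 8 * N `^ (- (1/8)).
  rewrite mulrCA -powRD_gt0 //.
  by congr (_ * (_ `^ _)); lra.
rewrite ler_pM2l; last lra.
apply: le_trans (_ : d `^ (1/8) <= _); first by apply: powRN_le => //; lra.
by apply: ger_powR; [rewrite dpos d1 | lra].
Qed.

Lemma powR_mul_ln_le d L : 0 < d -> 0 <= L -> d * L ^+ 3 <= 1 ->
  d `^ (2/5) * L <= d `^ (1/15).
Proof.
move=> d0 L0 dL.
have -> : (2/5 : R) = 1/15 + 1/3 by lra.
rewrite powRD_gt0 // -mulrA -[X in _ <= X]mulr1 ler_wpM2l ?powR_ge0 //.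
have h3 : 0 <= d `^ (1/3) * L by rewrite mulr_ge0 // powR_ge0.
rewrite -(@expr_le1 _ 3) // exprMn -powR_mulrn ?powR_ge0 // -powRrM.
have -> : (1/3 * 3%:R : R) = 1 by lra.
by rewrite powRr1 //; exact: ltW.
Qed.

Lemma sqrt_scale_bound N d X (del : R) : 4 <= N -> 1 <= N * d -> d <= 1 ->
  d * (ln N) ^+ 3 <= 1 -> 0 <= del -> X <= del * d `^ (2/5) * Num.sqrt N ->
  N `^ (- (1/4)) * Num.sqrt ((X + 1) * ln N) <= Num.sqrt (del + 1) * d `^ (1/30).
Proof.
move=> N4 Nd d1 dL del0 HX.
have N0 : 0 < N by lra.
have L0 : 0 <= ln N by apply: ln_ge0; lra.
have [X0|X0] := leP 0 (X + 1); last first.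
  rewrite ler0_sqrtr ?mulr0; first by rewrite mulr_ge0 ?sqrtr_ge0 ?powR_ge0.
  nra.
have dpos : 0 < d.
  rewrite ltNge; apply/negP => dn.
  have : N * d <= 0 by rewrite pmulr_rle0.
  lra.
have h0 : 0 <= N `^ (- (1/2)) := powR_ge0 _ _.
have -> : N `^ (- (1/4)) = Num.sqrt (N `^ (- (1/2))).
  by rewrite -powR12_sqrt // -powRrM; congr (_ `^ _); lra.
rewrite -sqrtrM //.
have Es : N `^ (- (1/2)) * Num.sqrt N = 1.
  rewrite -powR12_sqrt; last exact: ltW.
  by rewrite -powRD_gt0 // (_ : - (1/2) + 2^-1 = 0) ?powRr0 //; lra.
have Hn : N `^ (- (1/2)) <= d `^ (2/5).
  apply: le_trans (_ : d `^ (1/2) <= _); first by apply: powRN_le => //; lra.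
  by apply: ger_powR; [rewrite dpos d1 | lra].
have Hd := powR_mul_ln_le dpos L0 dL.
have Hin : N `^ (- (1/2)) * ((X + 1) * ln N) <= (del + 1) * d `^ (1/15).
  apply: le_trans (_ : (del * d `^ (2/5) + d `^ (2/5)) * ln N <= _).
    have -> : N `^ (- (1/2)) * ((X + 1) * ln N) =
       (N `^ (- (1/2)) * X + N `^ (- (1/2))) * ln N by ring.
    apply: ler_wpM2r => //; apply: lerD => //.
    apply: le_trans (ler_wpM2l h0 HX) _.
    have -> : N `^ (- (1/2)) * (del * d `^ (2/5) * Num.sqrt N) =
      del * d `^ (2/5) * (N `^ (- (1/2)) * Num.sqrt N) by ring.
    by rewrite Es mulr1.
  have -> : (del * d `^ (2/5) + d `^ (2/5)) * ln N = (del + 1) * (d `^ (2/5) * ln N) by ring.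
  by apply: ler_wpM2l => //; lra.
apply: le_trans (_ : Num.sqrt ((del + 1) * d `^ (1/15)) <= _).
  by rewrite ler_sqrt // mulr_ge0 ?powR_ge0 //; lra.
rewrite sqrtrM; last lra.
apply: ler_wpM2l; first exact: sqrtr_ge0.
rewrite -powR12_sqrt ?powR_ge0 // -powRrM.
by have -> : (1/15 * 2^-1 : R) = 1/30 by lra.
Qed.

Lemma sqrt_mulD1_le Z rho L : 0 <= rho -> 1 <= L -> Z <= rho * L ->
  Num.sqrt ((Z + 1) * L) <= (rho + 1) * L.
Proof.
move=> r0 L1 hZ.
have [hZ0|hZ0] := leP 0 (Z + 1); last first.
  by rewrite ler0_sqrtr; [rewrite mulr_ge0 //; lra | nra].
have -> : (rho + 1) * L = Num.sqrt (((rho + 1) * L) ^+ 2).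
  by rewrite sqrtr_sqr ger0_norm // mulr_ge0 //; lra.
rewrite ler_sqrt ?sqr_ge0 //.
have : (Z + 1) * L <= (rho * L + 1) * L by apply: ler_wpM2r; lra.
have : (rho * L + 1) * L <= ((rho + 1) * L) ^+ 2 by rewrite expr2; nra.
lra.
Qed.

Lemma interp_near_scaled_le (f : nat -> R) B N s t :
  4 <= N -> 0 <= B -> 0 <= s -> s <= t -> t <= 1 ->
  (forall m, `|f m.+1 - f m| <= B * ln N) ->
  (Num.truncn (N * t) <= (Num.truncn (N * s)).+1)%N ->
  N `^ (- (1/4)) * `|interp f (N * t) - interp f (N * s)| <=
    16 * B * (t - s) `^ (1/30).
Proof.
move=> N4 B0 s0 st t1 f_step ht.
have N0 : 0 < N by lra.
have x0 : 0 <= N * s by rewrite mulr_ge0 //; lra.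
have xy : N * s <= N * t by rewrite ler_wpM2l //; lra.
have [hx1 _] := andP (truncn_itv x0).
have [_ hy2] := andP (truncn_itv (le_trans x0 xy)).
have Nd2 : N * (t - s) <= 2.
  have : (Num.truncn (N * t))%:R <= (Num.truncn (N * s)).+1%:R :> R by rewrite ler_nat.
  rewrite mulrBr -!natr1 in hy2 *; lra.
have d01 : 0 <= t - s <= 1 by apply/andP; split; lra.
have hN := near_scale_bound N4 d01 Nd2.
apply: le_trans (ler_wpM2l (powR_ge0 _ _) (interp_lipschitz_near f_step x0 xy ht)) _.
rewrite -mulrBr.
have -> : N `^ (- (1/4)) * (N * (t - s) * (B * ln N)) =
  B * (N `^ (- (1/4)) * (N * (t - s) * ln N)) by ring.
have -> : 16 * B * (t - s) `^ (1/30) = B * (16 * (t - s) `^ (1/30)) by ring.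
exact: ler_wpM2l.
Qed.

End Estimates.

Lemma sum_IK_le (R : realType) K (F : nat -> nat -> R) (X : R) : 0 <= X ->
  (forall k j, (1 <= j <= k)%N -> (k <= K)%N -> F k j <= X) ->
  \sum_(1 <= k < K.+1) \sum_(1 <= j < k.+1) F k j <= K%:R * K%:R * X.
Proof.
move=> X0 HF.
apply: le_trans (_ : \sum_(1 <= k < K.+1) (K%:R * X) <= _).
  rewrite big_nat [X in _ <= X]big_nat; apply: ler_sum => k /andP[k1 kK].
  apply: le_trans (_ : \sum_(1 <= j < k.+1) X <= _).
    by rewrite big_nat [X in _ <= X]big_nat; apply: ler_sum => j /andP[j1 jk]; apply: HF; lia.
  rewrite sumr_const_nat subSS subn0 -[X *+ k]mulr_natl.
  by apply: ler_wpM2r => //; rewrite ler_nat; lia.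
by rewrite sumr_const_nat subSS subn0 -[_ *+ K]mulr_natl mulrA.
Qed.

(* 16 * 2 gam (rho + 1) controls nearby times, 2 gam sqrt(del + 1) the two
   branches of a far pair. *)
Definition holder_const (R : realType) (del gam rho : R) : R :=
  32 * gam * (rho + 1) + 2 * gam * Num.sqrt (del + 1).

Lemma GnE (R : realType) (mu : nat -> R) T n k j s :
  Gn mu T n k j s = n%:R `^ (- (1/4)) * interp (gdev mu T k j) (n%:R * s).
Proof. by []. Qed.

Section OnOmega.
Variables (R : realType) (mu : nat -> R) (K n : nat) (del gam rho : R).
Variable T : seq word.
Hypotheses (n_ge4 : (4 <= n)%N) (del_ge0 : 0 <= del) (gam_ge0 : 0 <= gam)
  (rho_ge0 : 0 <= rho).
Hypothesis T_Omega : Omega mu K n (2/5) del gam rho T.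

Lemma gdev_step_le k j : (1 <= j <= k)%N -> (k <= K)%N ->
  forall m, `|gdev mu T k j (minn m.+1 n) - gdev mu T k j (minn m n)| <=
            2 * gam * (rho + 1) * ln (n%:R : R).
Proof.
case: T_Omega => [[HT Hs] [_ [Hstep [_ A_dev]]]] jk kK m.
set L := ln (n%:R : R).
have L1 : 1 <= L by apply: ln_ge1; rewrite (ler_nat R 4 n).
have [mn|mn] := ltnP m n; last first.
  rewrite !(minn_idPr _) //; last exact: leqW.
  by rewrite subrr normr0 !mulr_ge0 ?addr_ge0 //; apply: le_trans L1.
rewrite (minn_idPl mn).
have [c [hc hb]] := gdev_two_vertices gam_ge0 (le_trans ler01 L1)
  (fun w l => A_dev k j w l jk kK) HT Hs (leqnSn m) mn.
rewrite distrC; apply: le_trans hb _.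
have [hb1 hb2] : height R T m.+1 - height R T m <= rho * L /\
                 height R T m - height R T m.+1 <= rho * L.
  by have := Hstep m mn; rewrite -/L ler_norml /height => /andP[? ?]; split; lra.
have p1 : 0 <= height R T m by rewrite /height ler0n.
have p2 : 0 <= height R T m.+1 by rewrite /height ler0n.
have -> : 2 * gam * (rho + 1) * L = gam * ((rho + 1) * L) + gam * ((rho + 1) * L) by ring.
have [->|->] : c = m \/ c = m.+1 by lia.
all: by apply: lerD; apply: ler_wpM2l => //; apply: sqrt_mulD1_le => //; lra.
Qed.

Lemma height_holder s t a c : 0 <= s -> t <= 1 ->
  n%:R * s <= a%:R -> a%:R <= n%:R * t ->
  n%:R * s <= c%:R -> c%:R <= n%:R * t ->
  height R T a - height R T c <= del * (t - s) `^ (2/5) * Num.sqrt n%:R.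
Proof.
case: T_Omega => [_ [Hholder _]] s0 t1 ha1 ha2 hc1 hc2.
set N := n%:R : R.
have N0 : 0 < N by rewrite ltr0n; lia.
have vertex_time b : N * (b%:R / N) = b%:R by rewrite mulrC divfK // gt_eqF.
have in_st b : N * s <= b%:R -> b%:R <= N * t -> s <= b%:R / N <= t.
  by move=> h1 h2; rewrite ler_pdivlMr // ler_pdivrMr // ![_ * N]mulrC h1 h2.
have /andP[Ha1 Ha2] := in_st _ ha1 ha2.
have /andP[Hc1 Hc2] := in_st _ hc1 hc2.
have := Hholder (a%:R / N) (c%:R / N) ltac:(apply/andP; lra) ltac:(apply/andP; lra).
rewrite /hn -/N !vertex_time !interp_nat => Hh.
have Hd : `|c%:R / N - a%:R / N| `^ (2/5) <= (t - s) `^ (2/5).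
  apply: ge0_ler_powR; rewrite ?nnegrE; [lra | exact: normr_ge0 | lra |].
  by rewrite ler_norml; apply/andP; split; lra.
rewrite -ler_pdivrMr ?sqrtr_gt0 //.
apply: le_trans (ler_norm _) _; rewrite mulrBl.
by apply: le_trans Hh _; apply: ler_wpM2l => //; lra.
Qed.

Lemma gdev_far_le k j s t a b : (1 <= j <= k)%N -> (k <= K)%N ->
  0 <= s -> t <= 1 -> 1 <= n%:R * (t - s) -> (t - s) * ln (n%:R : R) ^+ 3 <= 1 ->
  n%:R * s <= a%:R -> (a <= b)%N -> b%:R <= n%:R * t ->
  n%:R `^ (- (1/4)) * `|gdev mu T k j a - gdev mu T k j b| <=
    2 * gam * Num.sqrt (del + 1) * (t - s) `^ (1/30).
Proof.
have [[HT Hs] [_ [_ [_ A_dev]]]] := T_Omega.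
move=> jk kK s0 t1 Nd dL ha ab hb.
set N := n%:R : R; set d := t - s.
have N4 : 4 <= N by rewrite /N (ler_nat R 4 n).
have L1 : 1 <= ln N by apply: ln_ge1.
have Nt : N * t <= N by rewrite -[X in _ <= X]mulr1 ler_wpM2l //; lra.
have bn : (b <= n)%N by rewrite -(ler_nat R); lra.
have [c [/andP[ac cb] hab]] := gdev_two_vertices gam_ge0 (le_trans ler01 L1)
  (fun w l => A_dev k j w l jk kK) HT Hs ab bn.
have nat_le x y : (x <= y)%N -> x%:R <= y%:R :> R by rewrite ler_nat.
have hc1 : N * s <= c%:R by apply: le_trans ha (nat_le _ _ ac).
have hc2 : c%:R <= N * t by apply: le_trans (nat_le _ _ cb) hb.
have Hsqrt x : N * s <= x%:R -> x%:R <= N * t ->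
    N `^ (- (1/4)) * Num.sqrt ((height R T x - height R T c + 1) * ln N) <=
    Num.sqrt (del + 1) * d `^ (1/30).
  move=> h1 h2; apply: (sqrt_scale_bound N4 Nd _ dL del_ge0); first by rewrite /d; lra.
  exact: height_holder.
apply: le_trans (ler_wpM2l (powR_ge0 _ _) hab) _.
have -> : 2 * gam * Num.sqrt (del + 1) * d `^ (1/30) =
  gam * (Num.sqrt (del + 1) * d `^ (1/30)) + gam * (Num.sqrt (del + 1) * d `^ (1/30)).
  by ring.
rewrite mulrDr; apply: lerD; rewrite mulrCA; apply: ler_wpM2l => //.
- exact: Hsqrt ha (le_trans (nat_le _ _ ab) hb).
- exact: Hsqrt (le_trans ha (nat_le _ _ ab)) hb.
Qed.

Lemma interp_gdev_far_le k j s t : (1 <= j <= k)%N -> (k <= K)%N ->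
  0 <= s -> s <= t -> t <= 1 -> (t - s) * ln (n%:R : R) ^+ 3 <= 1 ->
  ((Num.truncn (n%:R * s)).+1 < Num.truncn (n%:R * t))%N ->
  n%:R `^ (- (1/4)) * `|interp (fun l => gdev mu T k j (minn l n)) (n%:R * t) -
                       interp (fun l => gdev mu T k j (minn l n)) (n%:R * s)| <=
  holder_const del gam rho * (t - s) `^ (1/30).
Proof.
move=> jk kK s0 st t1 dL far.
set N := n%:R : R; set d := t - s.
have N4 : 4 <= N by rewrite /N (ler_nat R 4 n).
have x0 : 0 <= N * s by rewrite mulr_ge0 //; lra.
have xy : N * s <= N * t by rewrite ler_wpM2l //; lra.
have yN : N * t <= N by rewrite -[X in _ <= X]mulr1 ler_wpM2l //; lra.
apply: le_trans (ler_wpM2l (powR_ge0 _ _) (interp_far_le (gdev_step_le jk kK) x0 xy far)) _.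
have [_ hx2] := andP (truncn_itv x0).
have [hy1 _] := andP (truncn_itv (le_trans x0 xy)).
set m := Num.truncn (N * s) in hx2 far *.
set m' := Num.truncn (N * t) in hy1 far *.
have m'n : (m' <= n)%N by rewrite -(ler_nat R); lra.
rewrite (minn_idPl (leq_trans (ltnW far) m'n)) (minn_idPl m'n).
have Nd1 : 1 <= N * d.
  have : m.+2%:R <= m'%:R :> R by rewrite ler_nat.
  rewrite /d mulrBr -!natr1 in hx2 *; lra.
have d1 : d <= 1 by rewrite /d; lra.
have far_bound := far_scale_bound N4 Nd1 d1.
have gdev_bound := gdev_far_le jk kK s0 t1 Nd1 dL (ltW hx2) (ltnW far) hy1.
have -> : holder_const del gam rho * d `^ (1/30) =
  32 * gam * (rho + 1) * d `^ (1/30) + 2 * gam * Num.sqrt (del + 1) * d `^ (1/30).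
  by rewrite /holder_const; ring.
rewrite mulrDr; apply: lerD => //.
have -> : N `^ (- (1/4)) * (2 * (2 * gam * (rho + 1) * ln N)) =
  4 * gam * (rho + 1) * (N `^ (- (1/4)) * ln N) by ring.
have -> : 32 * gam * (rho + 1) * d `^ (1/30) = 4 * gam * (rho + 1) * (8 * d `^ (1/30)).
  by ring.
by apply: ler_wpM2l => //; rewrite !mulr_ge0 ?addr_ge0.
Qed.

Lemma Gn_holder k j s t : (1 <= j <= k)%N -> (k <= K)%N ->
  0 <= s -> s <= t -> t <= 1 -> (t - s) * ln (n%:R : R) ^+ 3 <= 1 ->
  `|Gn mu T n k j s - Gn mu T n k j t| <= holder_const del gam rho * (t - s) `^ (1/30).
Proof.
move=> jk kK s0 st t1 dL.
set N := n%:R : R.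
have N4 : 4 <= N by rewrite /N (ler_nat R 4 n).
have q0 : 0 <= N `^ (- (1/4)) := powR_ge0 _ _.
have x0 : 0 <= N * s by rewrite mulr_ge0 //; lra.
have xy : N * s <= N * t by rewrite ler_wpM2l //; lra.
have yN : N * t <= N by rewrite -[X in _ <= X]mulr1 ler_wpM2l //; lra.
rewrite !GnE -/N -mulrBr normrM (ger0_norm q0) distrC.
(* At time 1 interp reads f (n + 1), past the last vertex; clamping to n keeps
   every step inside the tree. *)
rewrite (@interp_minn _ _ n (N * s)) ?x0 /=; last lra.
rewrite (@interp_minn _ _ n (N * t)) /=; last by apply/andP; lra.
have [near|far] := leqP (Num.truncn (N * t)) (Num.truncn (N * s)).+1.
  have B0 : 0 <= 2 * gam * (rho + 1) by rewrite !mulr_ge0 ?addr_ge0.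
  apply: le_trans (interp_near_scaled_le N4 B0 s0 st t1 (gdev_step_le jk kK) near) _.
  apply: ler_wpM2r; first exact: powR_ge0.
  have : 0 <= gam * Num.sqrt (del + 1) by rewrite mulr_ge0 ?sqrtr_ge0.
  by rewrite /holder_const; lra.
exact: interp_gdev_far_le.
Qed.

Lemma G_dist1_holder s t : 0 <= s <= 1 -> 0 <= t <= 1 ->
  `|t - s| * ln (n%:R : R) ^+ 3 <= 1 ->
  G_dist1 mu K T n s t <= K%:R * K%:R * (holder_const del gam rho * `|t - s| `^ (1/30)).
Proof.
move=> /andP[s0 s1] /andP[t0 t1] dL.
apply: sum_IK_le => [|k j jk kK].
  by rewrite mulr_ge0 ?powR_ge0 // addr_ge0 ?mulr_ge0 ?addr_ge0 ?sqrtr_ge0.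
have [st|ts] := leP s t.
  rewrite ger0_norm ?subr_ge0 // in dL *.
  exact: Gn_holder.
rewrite distrC ger0_norm ?subr_ge0 ?(ltW ts) // in dL *.
by rewrite distrC; apply: Gn_holder => //; apply: ltW.
Qed.

End OnOmega.

Lemma fsum_weighted_le (R : realType) (I : choiceType) (A : set I) (w F : I -> R) (B : R) :
  (forall i, A i -> 0 <= w i) -> (forall i, A i -> F i <= B) ->
  0 < \sum_(i \in A) w i ->
  \sum_(i \in A) (w i * F i) <= B * \sum_(i \in A) w i.
Proof.
move=> w0 FB.
case: (@finite_supportP R I A w 0) => [_ | X XA wX _]; first by rewrite big_nil ltxx.
move=> _.
rewrite (fsbigE (finmap.enum_fset X)); [|exact: finmap.fset_uniq|exact: XA|].
  2: by move=> i Ai iX; rewrite wX // mul0r.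
have -> : \sum_(i <- finmap.enum_fset X | i \in A) (w i * F i) =
          \sum_(i <- finmap.enum_fset X) (w i * F i).
  rewrite big_seq_cond [RHS]big_seq; apply: eq_bigl => i.
  by apply/andP/idP => [[]//|iX]; split => //; apply/mem_set; apply: XA.
rewrite mulr_sumr big_seq [X in _ <= X]big_seq; apply: ler_sum => i iX.
have Ai : A i by apply: XA.
by rewrite mulrC ler_wpM2r // ?w0 // FB.
Qed.

Lemma En_le_bound (R : realType) (mu : nat -> R) n (f : seq word -> R) (B : R) :
  (forall k, 0 <= mu k) -> 0 < Zn mu n -> (forall T, f T <= B) -> En mu n f <= B.
Proof.
move=> mu0 Z0 fB; rewrite /En ler_pdivrMr //.
apply: fsum_weighted_le Z0 => // T _.
exact: prodr_ge0.
Qed.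
Theorem lemma19 (R : realType) (mu : nat -> R) (K : nat)
  (* (H1) *)
  (HK : (0 < K)%N)
  (mu_ge0 : forall k, 0 <= mu k)
  (mu_supp : forall k, (K < k)%N -> mu k = 0)
  (mu_sum : \sum_(k < K.+1) mu k = 1)
  (mu_crit : \sum_(k < K.+1) k%:R * mu k = 1)
  (mu_nondeg : mu 0%N + mu 1%N != 1)
  (* (H2) : the vectors (Y_{k,1},...,Y_{k,k}) ~ nu_k, realized on a probability space *)
  (d : measure_display) (Om : measurableType d) (P : probability Om R)
  (Y : nat -> nat -> Om -> R)
  (HYint : forall k j, (1 <= j <= k)%N -> (k <= K)%N ->
     P.-integrable setT (EFin \o Y k j))
  (Hmean : \sum_(1 <= k < K.+1) \sum_(1 <= j < k.+1)
             mu k * Rintegral P setT (Y k j) = 0)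
  (Hvar : (0 < \sum_(1 <= k < K.+1) \sum_(1 <= j < k.+1)
             (mu k)%:E * \int[P]_x ((Y k j x) ^+ 2)%:E)%E /\
          (\sum_(1 <= k < K.+1) \sum_(1 <= j < k.+1)
             (mu k)%:E * \int[P]_x ((Y k j x) ^+ 2)%:E < +oo)%E)
  (Hmom : exists p : R, 4 < p /\
     forall k j, (1 <= j <= k)%N -> (k <= K)%N ->
       (\int[P]_x ((`|Y k j x - Rintegral P setT (Y k j)| `^ p)%:E) < +oo)%E)
  (eps : R) (heps : 0 < eps)
  (delta gamma rho : R) (hdelta : 0 < delta) (hgamma : 0 < gamma) (hrho : 0 < rho)
  (HOmega : exists N : nat, forall n : nat, (N <= n)%N -> 0 < Zn mu n ->
     1 - eps <= Pn mu n (Omega mu K n (2 / 5) delta gamma rho))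
  (alpha' a : R) (halpha' : 0 < alpha') (ha : 0 < a) :
  exists beta c : R, 0 < beta /\ 0 < c /\
    exists N : nat, forall n : nat, (N <= n)%N -> 0 < Zn mu n ->
      forall s t : R, 0 <= s <= 1 -> 0 <= t <= 1 ->
        `|s - t| <= (ln (n%:R : R)) ^- 3 ->
        En mu n (fun T => G_dist1 mu K T n s t `^ beta *
                          \1_(Omega mu K n (2 / 5) delta gamma rho) T)
          <= c * `|t - s| `^ (1 + a).
Proof.
have C_gt0 : 0 < holder_const delta gamma rho.
  rewrite /holder_const; apply: ltr_wpDr; first by rewrite !mulr_ge0 ?sqrtr_ge0 //; lra.
  by rewrite !mulr_gt0 //; lra.
have beta_gt0 : 0 < 30 * (1 + a) by lra.
exists (30 * (1 + a)), ((K%:R * K%:R * holder_const delta gamma rho) `^ (30 * (1 + a))).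
split=> //; split; first by apply: powR_gt0; rewrite !mulr_gt0 ?ltr0n.
exists 4%N => n n4 Z0 s t hs ht hst.
apply: En_le_bound => // T.
rewrite indicE; have [/set_mem T_Omega|_] := boolP (T \in Omega mu K n (2 / 5) delta gamma rho);
  last by rewrite mulr0 mulr_ge0 // powR_ge0.
rewrite mulr1.
have dL : `|t - s| * ln (n%:R : R) ^+ 3 <= 1.
  have ln3_gt0 : 0 < ln (n%:R : R) ^+ 3.
    by apply: exprn_gt0; apply: lt_le_trans (ln_ge1 _); rewrite ?(ler_nat R 4 n).
  by have := ler_wpM2r (ltW ln3_gt0) hst; rewrite mulVf ?gt_eqF // distrC.
have G_holder := G_dist1_holder n4 (ltW hdelta) (ltW hgamma) (ltW hrho) T_Omega hs ht dL.
have G0 : 0 <= G_dist1 mu K T n s t by apply: sumr_ge0 => k _; apply: sumr_ge0.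
apply: le_trans (ge0_ler_powR (ltW beta_gt0) _ _ G_holder) _; rewrite ?nnegrE //.
  by rewrite !mulr_ge0 ?powR_ge0 //; apply: ltW.
rewrite mulrA powRM ?powR_ge0 //; last by rewrite !mulr_ge0 //; apply: ltW.
rewrite -powRrM.
by have -> : 1 / 30 * (30 * (1 + a)) = 1 + a by lra.
Qed.
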